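(* For every subset $I$ of the positive integers, the relation $\leq_I$ is a partial order on the set of planar forests.
   Context: Planar rooted trees have their children linearly ordered left to right; a planar forest is a finite, possibly empty, sequence $t_1\cdots t_n$ of planar rooted trees. Orders on vertices: $s\geq_{high}s'$ iff $s'=s$ or $s'$ is an ancestor of $s$; for $\geq_{high}$-incomparable $s,s'$, $s\geq_{left}s'$ iff $s\in t_i,s'\in t_j$ with $i<j$, or both lie in $t_i$ and $s\geq_{left}s'$ in the forest obtained from $t_i$ by deleting its root (recursively); $s\geq_{h,l}s'$ iff $s\geq_{high}s'$ or $s\geq_{left}s'$ (a total order). Number the vertices of a forest $F$ of weight $n$ as $s_1\geq_{h,l}\cdots\geq_{h,l}s_n$. Admissible transformations: let $s$ be a vertex of $F$ which is the leftmost child of its parent $u$. (First kind) if $u$ is not a root, with parent $r$, detach the subtree rooted at $s$ and graft it as a child of $r$ placed immediately to the left of $u$; (second kind) if $u$ is a root, detach the subtree rooted at $s$ and insert it as a new tree of the forest immediately to the left of the tree of $u$. Everything else is unchanged. Such a transformation holds on $s$; it is a $j$-transformation if $s=s_j$. For $I$ a set of positive integers and forests $F,G$, $F\leq_I G$ iff there is a finite sequence $F=F_0,F_1,\dots,F_k=G$ ($k\geq0$) such that each $F_{i+1}$ is obtained from $F_i$ by a $j$-transformation for some $j\in I$. *)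

From Stdlib Require Import Relations.
From mathcomp Require Import all_boot.

Set Implicit Arguments. Unset Strict Implicit. Unset Printing Implicit Defensive.

Inductive ptree : Type := Node : seq ptree -> ptree.
Definition pforest := seq ptree.

(* A vertex is addressed by a path: for a forest, [i; c1; ...; ck] means
   tree number i (0-based), then child c1 (0-based, from the left), etc.
   Relative to a tree, the root is [::] and [c1; ...; ck] follows children. *)

(* Vertices of a tree listed in decreasing >=_{h,l} order:
   descendants before ancestors, left before right (post-order). *)
Fixpoint tpost (t : ptree) : seq (seq nat) :=
  match t with
  | Node c =>
    let fix aux (i : nat) (c : seq ptree) : seq (seq nat) :=
      match c with
      | [::] => [::]
      | t' :: c' => map (cons i) (tpost t') ++ aux i.+1 c'
      end
    in aux 0 c ++ [:: [::]]
  end.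

Fixpoint fpost_aux (i : nat) (F : pforest) : seq (seq nat) :=
  match F with
  | [::] => [::]
  | t :: F' => map (cons i) (tpost t) ++ fpost_aux i.+1 F'
  end.

(* s_1 >=_{h,l} s_2 >=_{h,l} ... >=_{h,l} s_n : s_j = nth [::] (fpost F) j.-1 *)
Definition fpost (F : pforest) : seq (seq nat) := fpost_aux 0 F.

(* tmove p t t' : t' is obtained from the tree t by a transformation of the
   first kind holding on the vertex s at (relative) address p: s is the
   leftmost child of u, u is a non-root vertex with parent r; the subtree at s
   is grafted as a child of r immediately to the left of u. *)
Inductive tmove : seq nat -> ptree -> ptree -> Prop :=
  | tmove_here (A B c : seq ptree) (s : ptree) :
      tmove [:: size A; 0]
            (Node (A ++ Node (s :: c) :: B))
            (Node (A ++ s :: Node c :: B))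
  | tmove_deep (A B : seq ptree) (x x' : ptree) (p : seq nat) :
      tmove p x x' ->
      tmove (size A :: p) (Node (A ++ x :: B)) (Node (A ++ x' :: B)).

Inductive fmove : seq nat -> pforest -> pforest -> Prop :=
  (* second kind: u is a root *)
  | fmove_root (A B c : pforest) (s : ptree) :
      fmove [:: size A; 0] (A ++ Node (s :: c) :: B) (A ++ s :: Node c :: B)
  | fmove_tree (A B : pforest) (x x' : ptree) (p : seq nat) :
      tmove p x x' ->
      fmove (size A :: p) (A ++ x :: B) (A ++ x' :: B).

Definition jtrans (j : nat) (F G : pforest) : Prop :=
  0 < j <= size (fpost F) /\ fmove (nth [::] (fpost F) j.-1) F G.

Inductive leI (I : nat -> Prop) : pforest -> pforest -> Prop :=
  | leI_refl F : leI I F F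
  | leI_step F F1 G j : I j -> jtrans j F F1 -> leI I F1 G -> leI I F G.

(* Every admissible transformation lifts the subtree rooted at s one level
   closer to the roots and leaves all other depths unchanged, so it strictly
   decreases the total depth of the vertices of the forest. *)

From Stdlib Require Import Relations.
From mathcomp Require Import all_boot.
From mathcomp Require Import zify.

Fixpoint tsize (t : ptree) : nat :=
  match t with Node c => (sumn (map tsize c)).+1 end.

(* Sum over the vertices of t of their distance to the root of t. *)
Fixpoint tdepth (t : ptree) : nat :=
  match t with Node c => sumn (map (fun u => tdepth u + tsize u) c) end.

Definition fdepth (F : pforest) : nat := sumn (map tdepth F).

Lemma tsize_gt0 (t : ptree) : 0 < tsize t.
Proof. by case: t. Qed.

Lemma tmove_size_depth (p : seq nat) (x x' : ptree) :
  tmove p x x' -> tsize x' = tsize x /\ tdepth x' < tdepth x.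
Proof.
elim=> {p x x'} [A B c s | A B x x' p _ [size_x' depth_x']] /=;
  rewrite !map_cat !sumn_cat /=.
- by have := tsize_gt0 s; lia.
- by lia.
Qed.

Lemma fmove_depth (p : seq nat) (F G : pforest) :
  fmove p F G -> fdepth G < fdepth F.
Proof.
case=> {p F G} [A B c s | A B x x' p /tmove_size_depth [_ depth_x']];
  rewrite /fdepth !map_cat !sumn_cat /=.
- by have := tsize_gt0 s; lia.
- by lia.
Qed.

Lemma leI_depth (I : nat -> Prop) (F G : pforest) :
  leI I F G -> F = G \/ fdepth G < fdepth F.
Proof.
elim=> {F G} [F | F F1 G j _ [_ /fmove_depth depth_F1] _ [<- | depth_G]];
  [by left | right..]; lia.
Qed.

Lemma leI_trans (I : nat -> Prop) :
  Relation_Definitions.transitive pforest (leI I).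
Proof.
move=> F G H; elim=> {F G} // F F1 G j Ij jtrans_F _ IH /IH.
exact: leI_step Ij jtrans_F.
Qed.

Lemma leI_antisym (I : nat -> Prop) :
  Relation_Definitions.antisymmetric pforest (leI I).
Proof. by move=> F G /leI_depth [// | ?] /leI_depth [// | ?]; lia. Qed.

Theorem proposition27 (I : nat -> Prop) (hI : forall j, I j -> 0 < j) :
  Relation_Definitions.order pforest (leI I).
Proof.
split; [exact: leI_refl | exact: leI_trans | exact: leI_antisym].
Qed.
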